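(* Let $G$ be a graph on $[n]$ such that every $3$-subset of $[n]$ contains an edge of $G$. Then $E(G)$ dominates $B(n)$, where $B(n)=\{\{a,b\}: 1\le a<b\le n,\ a+b\le n\}$.
   Context: Let $X=(x_{ij})_{1\le i,j\le n}$ be a matrix of $n^2$ independent indeterminates over $\mathbb{Q}$, and for $1\le k\le n$ let $C_k(X)=(c_{S,T})$ be its $k$-th compound matrix: rows and columns are indexed by $k$-subsets $S,T$ of $[n]$, and $c_{S,T}=\det(x_{ij})_{i\in S,j\in T}$, computed in the field $\mathbb{Q}(x_{ij})$. For two families $F_1,F_2$ of $k$-subsets of $[n]$, $F_1$ dominates $F_2$ if the submatrix of $C_k(X)$ with rows indexed by $F_2$ and columns indexed by $F_1$ has rank $|F_2|$. A graph is identified with its set of edges, a family of $2$-subsets. *)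

From HB Require Import structures.
From mathcomp Require Import all_boot all_order all_algebra.
Set Implicit Arguments. Unset Strict Implicit. Unset Printing Implicit Defensive.
Import Order.TTheory GRing.Theory Num.Theory.
Local Open Scope ring_scope.

(* Polynomial ring over Q in k indeterminates, built as iterated
   univariate polynomial rings: mpoly 0 = Q, mpoly (k+1) = (mpoly k)[Y]. *)
Fixpoint mpoly (k : nat) : idomainType :=
  match k with
  | 0 => rat
  | k'.+1 => {poly (mpoly k')}
  end.

Fixpoint mvar (k : nat) : nat -> mpoly k :=
  match k return nat -> mpoly k with
  | 0 => fun _ => 0
  | k'.+1 => fun i => if i == k' then ('X : {poly mpoly k'})
                      else ((mvar k' i)%:P : {poly mpoly k'})
  end.

Definition nvars (n : nat) : nat := #|{: 'I_n * 'I_n}|.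

Definition Kfield (n : nat) : fieldType := {fraction (mpoly (nvars n))}.

Definition genX (n : nat) : 'M[Kfield n]_n :=
  \matrix_(i, j) tofrac (mvar (nvars n) (enum_rank (i, j))).

Definition Xnat (n : nat) (a b : nat) : Kfield n :=
  match @insub nat (fun m => m < n)%N 'I_n a, @insub nat (fun m => m < n)%N 'I_n b with
  | Some i, Some j => genX n i j
  | _, _ => 0
  end.

(* Entry c_{S,T} of the k-th compound matrix: det of the submatrix of X
   with rows in S and columns in T (elements listed increasingly). *)
Definition compound_entry (n k : nat) (S T : {set 'I_n}) : Kfield n :=
  \det (\matrix_(i < k, j < k)
          Xnat n (nth 0%N [seq val x | x <- enum S] i)
                 (nth 0%N [seq val x | x <- enum T] j)).

(* F1 dominates F2 (families of k-subsets of [n]): the submatrix of C_k(X)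
   with rows F2 and columns F1 has rank |F2|. *)
Definition dominates (n k : nat) (F1 F2 : {set {set 'I_n}}) : bool :=
  \rank (\matrix_(i < #|F2|, j < #|F1|)
           @compound_entry n k (enum_val i) (enum_val j)) == #|F2|.

(* B(n) = {{a,b} : 1 <= a < b <= n, a + b <= n}; ordinals are 0-based,
   so element a : 'I_n stands for a+1. *)
Definition Bn (n : nat) : {set {set 'I_n}} :=
  [set [set p.1; p.2] | p in [pred p : 'I_n * 'I_n | ((p.1 < p.2) && ((p.1).+1 + (p.2).+1 <= n))%N]].

Definition is_graph (n : nat) (E : {set {set 'I_n}}) : Prop :=
  forall e, e \in E -> #|e| = 2%N.

From HB Require Import structures.
From mathcomp Require Import all_boot all_order all_algebra.
From mathcomp Require Import zify.
Set Implicit Arguments. Unset Strict Implicit. Unset Printing Implicit Defensive.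
Import Order.TTheory GRing.Theory Num.Theory.
Local Open Scope ring_scope.

(* Rank can only drop under specialization, so it suffices to find a rational matrix Y whose
   2x2 minors with rows in B(n) and columns in E(G) are independent.  Y is built by induction
   on the vertex set V: the triangle condition yields u, w in V such that every other vertex
   is adjacent to u or w; u gets the coordinate vector e_k, w gets e_k + e_(k+|V|-1), and the
   other vertices are realized recursively in the coordinate window shifted by one.  The
   minors indexed by pairs {k, b} are then isolated by the edges at u and w, and the
   remaining ones are exactly the shifted copy of B(|V| - 2) handled by induction. *)

Definition mx_nat (R : nmodType) n (A : 'M[R]_n) (a b : nat) : R :=
  match @insub nat (fun m => m < n)%N 'I_n a, @insub nat (fun m => m < n)%N 'I_n b with
  | Some i, Some j => A i j
  | _, _ => 0
  end.

Lemma mx_natE (R : nmodType) n (A : 'M[R]_n) (i j : 'I_n) : mx_nat A i j = A i j.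
Proof. by rewrite /mx_nat !valK. Qed.

Lemma mx_nat_map (R S : nmodType) (f : {additive R -> S}) n (A : 'M[R]_n) a b :
  mx_nat (map_mx f A) a b = f (mx_nat A a b).
Proof.
rewrite /mx_nat; case: (@insub nat (fun m => m < n)%N 'I_n a) => [i|];
  by case: (@insub nat (fun m => m < n)%N 'I_n b) => [j|]; rewrite ?raddf0 ?mxE.
Qed.

Definition minor (R : comPzRingType) n k (A : 'M[R]_n) (S T : {set 'I_n}) : R :=
  \det (\matrix_(i < k, j < k) mx_nat A (nth 0%N [seq val x | x <- enum S] i)
                                        (nth 0%N [seq val x | x <- enum T] j)).

Lemma minor_map (R S : comPzRingType) (f : {rmorphism R -> S}) n k (A : 'M[R]_n) U T :
  minor k (map_mx f A) U T = f (minor k A U T).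
Proof.
rewrite /minor -det_map_mx; congr (\det _).
by apply/matrixP => i j; rewrite !mxE mx_nat_map.
Qed.

Lemma sorted_val_enum n (S : {set 'I_n}) : sorted ltn [seq val x | x <- enum S].
Proof.
apply: (subseq_sorted ltn_trans _ (iota_ltn_sorted 0 n)).
by rewrite -val_enum_ord enumT; apply/map_subseq/filter_subseq.
Qed.

Lemma val_enum_set2 n (a b : 'I_n) : (a < b)%N ->
  [seq val x | x <- enum [set a; b]] = [:: val a; val b].
Proof.
move=> ab; apply: (@irr_sorted_eq _ ltn ltn_trans ltnn).
- exact: sorted_val_enum.
- by rewrite /= ab.
- move=> x; rewrite !inE; apply/mapP/idP.
    by case=> y; rewrite mem_enum !inE => /orP[]/eqP-> ->; rewrite eqxx ?orbT.
  by case/orP=> /eqP->; [exists a | exists b]; rewrite // mem_enum !inE eqxx ?orbT.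
Qed.

Lemma det_mx22 (R : comPzRingType) (A : 'M[R]_2) : \det A = A 0 0 * A 1 1 - A 0 1 * A 1 0.
Proof.
rewrite (expand_det_row _ 0) !big_ord_recl big_ord0 /cofactor !det_mx11 !mxE /=.
have -> : lift (0 : 'I_2) (0 : 'I_1) = 1 by apply/val_inj.
have -> : lift (1 : 'I_2) (0 : 'I_1) = 0 by apply/val_inj.
by rewrite /bump /= add0n addn0 expr0 expr1 mul1r addr0 mulN1r mulrN.
Qed.

Lemma minor_set2 (R : comPzRingType) n (A : 'M[R]_n) (a b t1 t2 : 'I_n) :
  (a < b)%N -> (t1 < t2)%N ->
  minor 2 A [set a; b] [set t1; t2] = A a t1 * A b t2 - A a t2 * A b t1.
Proof. by move=> ab t12; rewrite /minor det_mx22 !mxE !val_enum_set2 //= !mx_natE. Qed.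

Definition minor_mx (R : comPzRingType) n k (A : 'M[R]_n) (F2 F1 : {set {set 'I_n}}) :
  'M[R]_(#|F2|, #|F1|) := \matrix_(i, j) minor k A (enum_val i) (enum_val j).

Lemma minor_mx_map (R S : comPzRingType) (f : {rmorphism R -> S}) n k (A : 'M[R]_n) F2 F1 :
  minor_mx k (map_mx f A) F2 F1 = map_mx f (minor_mx k A F2 F1).
Proof. by apply/matrixP => i j; rewrite !mxE minor_map. Qed.

Lemma mul_trmx_eq0 (F : realFieldType) n (w : 'rV[F]_n) : w *m w^T = 0 -> w = 0.
Proof.
move=> /(congr1 (fun M : 'M_1 => M 0 0)); rewrite !mxE => ww0.
have sumsq0 : \sum_i w 0 i ^+ 2 = 0.
  by rewrite -[RHS]ww0; apply: eq_bigr => i _; rewrite mxE expr2.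
apply/rowP => j; rewrite mxE; apply/eqP; rewrite -sqrf_eq0; apply/eqP.
by apply: (psumr_eq0P _ sumsq0) => // i _; apply: sqr_ge0.
Qed.

Lemma det_mul_trmx_neq0 (F : realFieldType) m n (A : 'M[F]_(m, n)) :
  row_free A -> \det (A *m A^T) != 0.
Proof.
move=> freeA; apply/negP => /det0P[v v_neq0].
rewrite mulmxA => vAAt0.
have vA0 : v *m A = 0 by apply: mul_trmx_eq0; rewrite trmx_mul mulmxA vAAt0 mul0mx.
by move: v_neq0; rewrite -(mulmx_free_eq0 _ freeA) vA0 eqxx.
Qed.

Lemma row_free_tofrac (R : idomainType) (F : realFieldType) (f : {rmorphism R -> F})
    m n (P : 'M[R]_(m, n)) :
  row_free (map_mx f P) -> row_free (map_mx (@tofrac R) P).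
Proof.
move=> /det_mul_trmx_neq0; rewrite map_trmx -map_mxM det_map_mx => detP.
have unitP : map_mx (@tofrac R) P *m (map_mx (@tofrac R) P)^T \in unitmx.
  rewrite unitmxE unitfE map_trmx -map_mxM det_map_mx tofrac_eq0.
  by apply: contraNneq detP => ->; rewrite rmorph0.
rewrite -row_leq_rank -{1}(mxrank_unit unitP); exact: mxrankM_maxl.
Qed.

Fixpoint mpoly_eval (v : nat -> rat) (k : nat) : {rmorphism mpoly k -> rat} :=
  match k return {rmorphism mpoly k -> rat} with
  | 0 => idfun
  | k'.+1 => (horner_eval (v k') \o map_poly (mpoly_eval v k'))%FUN
  end.

Lemma mpoly_eval_mvar v k i : (i < k)%N -> mpoly_eval v k (mvar k i) = v i.
Proof.
elim: k => // k IH; rewrite ltnS leq_eqVlt => /orP[/eqP->|ltik] /=.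
  by rewrite eqxx horner_evalE map_polyX hornerX.
rewrite (ltn_eqF ltik) horner_evalE map_polyC hornerC; exact: IH.
Qed.

Definition genP n : 'M[mpoly (nvars n)]_n := \matrix_(i, j) mvar (nvars n) (enum_rank (i, j)).

Lemma genX_tofrac n : genX n = map_mx (@tofrac _) (genP n).
Proof. by apply/matrixP => i j; rewrite !mxE. Qed.

Lemma genP_specializes n (Y : 'M[rat]_n) :
  exists f : {rmorphism mpoly (nvars n) -> rat}, map_mx f (genP n) = Y.
Proof.
pose v r := if @insub nat (fun m => m < nvars n)%N 'I_(nvars n) r is Some o
            then let p := enum_val o in Y p.1 p.2 else 0.
exists (mpoly_eval v (nvars n)); apply/matrixP => i j.
by rewrite !mxE mpoly_eval_mvar ?ltn_ord // /v valK enum_rankK.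
Qed.

Lemma dominatesE n k (F1 F2 : {set {set 'I_n}}) :
  dominates k F1 F2 = row_free (minor_mx k (genX n) F2 F1).
Proof. by []. Qed.

Lemma dominates_specialization n k (F1 F2 : {set {set 'I_n}}) (Y : 'M[rat]_n) :
  row_free (minor_mx k Y F2 F1) -> dominates k F1 F2.
Proof.
have [f <-] := genP_specializes Y.
by rewrite dominatesE genX_tofrac !minor_mx_map; apply: row_free_tofrac.
Qed.

(* [p - (k, k)] is a pair of B(m), with 0-based vertices. *)
Definition window_pair n (k m : nat) (p : 'I_n * 'I_n) : bool :=
  [&& (k <= p.1)%N, (p.1 < p.2)%N & (p.1 + p.2 + 2 <= k + k + m)%N].

Lemma sum_mul_delta (R : pzSemiRingType) n (d : 'I_n -> R) (j : 'I_n) :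
  \sum_a d a * (a == j)%:R = d j.
Proof. by rewrite (bigD1 j) //= eqxx mulr1 big1 ?addr0 // => i /negbTE->; rewrite mulr0. Qed.

Lemma edge_set2 n (e : {set 'I_n}) :
  #|e| = 2 -> exists t1 t2 : 'I_n, (t1 < t2)%N /\ e = [set t1; t2].
Proof.
move/eqP/cards2P => [x [x' [xx' ->]]].
case: (ltngtP x x') => [lt|gt|eq]; first by exists x, x'.
  by exists x', x; rewrite setUC.
by move: xx'; rewrite (val_inj eq) eqxx.
Qed.

Lemma sum_minor_edge (R : comPzRingType) n (P : pred ('I_n * 'I_n)) (Y : 'M[R]_n)
    (c : 'I_n -> 'I_n -> R) (u z : 'I_n) :
  u != z -> (forall p, P p -> p.1 < p.2)%N ->
  \sum_(p | P p) c p.1 p.2 * minor 2 Y [set p.1; p.2] [set u; z] = 0 ->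
  \sum_(p | P p) c p.1 p.2 * (Y p.1 u * Y p.2 z - Y p.1 z * Y p.2 u) = 0.
Proof.
move=> uz ltP; case: (ltngtP u z) => [lt|gt|eq].
- by move=> H; rewrite -[RHS]H; apply: eq_bigr => p /ltP lt12; rewrite minor_set2.
- rewrite setUC => H; apply/eqP; rewrite -oppr_eq0 -sumrN -[X in _ == X]H; apply/eqP.
  by apply: eq_bigr => p /ltP lt12; rewrite minor_set2 // -mulrN opprB.
- by case/eqP: uz; apply: val_inj.
Qed.

Section Realization.

Variables (n : nat) (E : {set {set 'I_n}}).
Hypothesis graphE : is_graph E.
Hypothesis triangleE : forall T : {set 'I_n}, #|T| = 3 -> exists2 e, e \in E & e \subset T.

Lemma dominating_pair (V : {set 'I_n}) : (1 < #|V|)%N ->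
  exists u w, [/\ u \in V, w \in V, u != w &
    forall z, z \in V -> z != u -> z != w -> ([set u; z] \in E) || ([set w; z] \in E)].
Proof.
move=> V_gt1.
case: (boolP [exists u, exists w, [&& u \in V, w \in V, u != w & [set u; w] \notin E]]).
  case/existsP=> u /existsP[w /and4P[uV wV uw uwE]]; exists u, w; split=> // z zV zu zw.
  have [|e eE eT] := triangleE (T := [set u; w; z]).
    by rewrite setUC !cardsU1 cards1 !inE negb_or zu zw uw.
  have [x [x' [xx' exx']]] := cards2P _ (introT eqP (graphE eE)); subst e.
  (* [e] lies in [{u, w, z}] and is not [{u, w}], so it joins [z] to [u] or [w]. *)
  move: eT; rewrite subUset !sub1set !inE => /andP[].
  move=> /orP[/orP[]|] /eqP ex /orP[/orP[]|] /eqP ex'; subst x x';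
    rewrite ?eqxx // in xx';
    first [ by rewrite eE ?orbT | by rewrite setUC in eE; rewrite eE ?orbT
          | by rewrite eE in uwE | by rewrite setUC eE in uwE ].
move/existsPn => complete; have [u [w [uV wV uw]]] := card_gt1P V_gt1.
exists u, w; split=> // z zV zu zw.
by move: (complete u) => /existsPn /(_ z); rewrite uV zV eq_sym zu /= negbK => ->.
Qed.

(* The columns of [Y] indexed by [V] are supported on, and span, the coordinate window
   [k, k + #|V|), and the minors with rows in the copy of B(#|V|) shifted into that window
   are independent on the edges inside [V]. *)
Record realizes (k : nat) (V : {set 'I_n}) (Y : 'M[rat]_n) : Prop := Realizes {
  realizes_support : forall a t, Y a t != 0 -> (t \in V) && (k <= a < k + #|V|)%N;
  realizes_span : forall d : 'I_n -> rat, (forall t, t \in V -> \sum_a d a * Y a t = 0) ->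
    forall a : 'I_n, (k <= a < k + #|V|)%N -> d a = 0;
  realizes_dominates : forall c : 'I_n -> 'I_n -> rat,
    (forall e, e \in E -> e \subset V ->
       \sum_(p | window_pair k #|V| p) c p.1 p.2 * minor 2 Y [set p.1; p.2] e = 0) ->
    forall p, window_pair k #|V| p -> c p.1 p.2 = 0 }.

Lemma realizes_card0 k (V : {set 'I_n}) : #|V| = 0 -> realizes k V 0.
Proof.
move=> V0; split; rewrite V0.
- by move=> a t; rewrite mxE eqxx.
- by move=> d _ a; lia.
- by move=> c _ p; rewrite /window_pair; lia.
Qed.

Lemma realizes_card1 (k0 : 'I_n) (V : {set 'I_n}) : #|V| = 1 ->
  exists Y, realizes k0 V Y.
Proof.
move=> V1; have [v ->] : exists v, V = [set v] by apply/cards1P/eqP.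
exists (\matrix_(a, t) ((t == v) && (a == k0))%:R); split; rewrite cards1.
- move=> a t; rewrite mxE; case: andP => [[/eqP -> /eqP ->] _|]; last by rewrite eqxx.
  by rewrite inE eqxx /=; lia.
- move=> d dv a a_k0; have := dv v; rewrite inE eqxx => /(_ isT).
  under eq_bigr do rewrite mxE eqxx.
  by rewrite sum_mul_delta; have -> // : a = k0 by apply/val_inj => /=; lia.
- by move=> c _ p; rewrite /window_pair; lia.
Qed.

Section Extension.

Variables (V : {set 'I_n}) (u w : 'I_n).
Hypotheses (uV : u \in V) (wV : w \in V) (uw : u != w).
Hypothesis cover : forall z, z \in V -> z != u -> z != w ->
  ([set u; z] \in E) || ([set w; z] \in E).

Local Notation V' := (V :\ u :\ w).

Variables (m : nat) (k0 k1 : 'I_n) (Y' : 'M[rat]_n).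
Hypothesis card_V' : #|V'| = m.
Hypothesis k1E : (k1 : nat) = (k0 + m).+1.
Hypothesis realY' : realizes k0.+1 V' Y'.

Definition extension : 'M[rat]_n := \matrix_(a, t)
  if t == u then (a == k0)%:R else if t == w then (a == k0)%:R + (a == k1)%:R else Y' a t.

Lemma mem_V' z : (z \in V') = [&& z != w, z != u & z \in V].
Proof. by rewrite !inE. Qed.

Lemma card_V : #|V| = m.+2.
Proof.
by rewrite (cardsD1 u V) uV (cardsD1 w (V :\ u)) !inE eq_sym uw wV /= card_V'.
Qed.

Lemma extension_u a : extension a u = (a == k0)%:R.
Proof. by rewrite mxE eqxx. Qed.

Lemma extension_w a : extension a w = (a == k0)%:R + (a == k1)%:R.
Proof. by rewrite mxE eq_sym (negbTE uw) eqxx. Qed.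

Lemma extension_V' (a z : 'I_n) : z \in V' -> extension a z = Y' a z.
Proof. by rewrite mem_V' mxE => /and3P[/negbTE-> /negbTE-> _]. Qed.

Lemma realizes_below (a z : 'I_n) : (a <= k0)%N -> Y' a z = 0.
Proof.
move=> a_le; apply/eqP/negP => /negP /(realizes_support realY') /andP[_].
by rewrite card_V'; lia.
Qed.

Lemma extension_support a t :
  extension a t != 0 -> (t \in V) && (k0 <= a < k0 + #|V|)%N.
Proof.
rewrite card_V; case: (t =P u) => [->|/eqP tu].
  by rewrite extension_u; case: (a =P k0) => [-> _|]; [rewrite uV /=; lia | rewrite eqxx].
case: (t =P w) => [->|/eqP tw].
  rewrite extension_w; case: (a =P k0) => [-> _|_]; first by rewrite wV /=; lia.
  by case: (a =P k1) => [-> _|_]; [rewrite wV /=; lia | rewrite addr0 eqxx].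
rewrite mxE (negbTE tu) (negbTE tw) => /(realizes_support realY') /andP[].
by rewrite mem_V' card_V' => /and3P[_ _ ->] /=; lia.
Qed.

Lemma extension_span (d : 'I_n -> rat) :
  (forall t, t \in V -> \sum_a d a * extension a t = 0) ->
  forall a : 'I_n, (k0 <= a < k0 + #|V|)%N -> d a = 0.
Proof.
move=> dY a; rewrite card_V => a_win.
have d_k0 : d k0 = 0.
  by have := dY u uV; under eq_bigr do rewrite extension_u; rewrite sum_mul_delta.
have d_k1 : d k1 = 0.
  have := dY w wV; under eq_bigr do rewrite extension_w mulrDr.
  by rewrite big_split /= !sum_mul_delta d_k0 add0r.
have [/val_inj->|a_k0] := eqVneq (a : nat) k0; first exact: d_k0.
have [/val_inj->|a_k1] := eqVneq (a : nat) k1; first exact: d_k1.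
apply: (realizes_span realY'); last by rewrite card_V'; lia.
move=> z zV'; have zV : z \in V by move: zV'; rewrite mem_V' => /and3P[].
by rewrite -[RHS](dY z zV); apply: eq_bigr => b _; rewrite extension_V'.
Qed.

Lemma minor_extension (a b t1 t2 : 'I_n) : (a < b)%N -> (t1 < t2)%N ->
  t1 \in V' -> t2 \in V' ->
  minor 2 extension [set a; b] [set t1; t2] = minor 2 Y' [set a; b] [set t1; t2].
Proof. by move=> ab t12 t1V t2V; rewrite !minor_set2 // !extension_V'. Qed.

Lemma extension_edge_sum (c : 'I_n -> 'I_n -> rat) (x z : 'I_n) :
  (forall a : 'I_n, (a <= k0 + m)%N -> extension a x = (a == k0)%:R) -> z \in V' ->
  \sum_(p | window_pair k0 m.+2 p)
     c p.1 p.2 * (extension p.1 x * extension p.2 z - extension p.1 z * extension p.2 x)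
  = \sum_b c k0 b * Y' b z.
Proof.
move=> Yx zV'.
have term i j : window_pair k0 m.+2 (i, j) ->
    c i j * (extension i x * extension j z - extension i z * extension j x)
    = (i == k0)%:R * (c k0 j * Y' j z).
  case/and3P=> /= k0_i ij win; rewrite !Yx; [|lia|lia].
  have j_k0 : (j == k0) = false by apply/eqP => jk; move: ij k0_i; rewrite jk; lia.
  rewrite j_k0 extension_V' // mulr0 subr0 mulrC.
  by case: (i =P k0) => [->|_]; rewrite ?mul1r ?mul0r // mulrC.
have -> : \sum_(p | window_pair k0 m.+2 p)
     c p.1 p.2 * (extension p.1 x * extension p.2 z - extension p.1 z * extension p.2 x)
  = \sum_i \sum_j (if window_pair k0 m.+2 (i, j) then (i == k0)%:R * (c k0 j * Y' j z) else 0).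
  rewrite pair_bigA big_mkcond; apply: eq_bigr => -[i j] _ /=.
  by case: ifP => // /term.
rewrite (bigD1 k0) //= [X in _ + X]big1 => [|i /negbTE i_k0]; last first.
  by apply: big1 => j _; rewrite i_k0 mul0r if_same.
rewrite addr0.
apply: eq_bigr => j _; rewrite eqxx mul1r; case: ifP => // not_win.
suff -> : Y' j z = 0 by rewrite mulr0.
apply/eqP/negP => /negP /(realizes_support realY') /andP[_].
by move: not_win; rewrite card_V' /window_pair /=; lia.
Qed.

Lemma V'_subset : V' \subset V.
Proof. exact: subset_trans (subsetDl _ _) (subsetDl _ _). Qed.

Section Relation.

Variable c : 'I_n -> 'I_n -> rat.
Hypothesis relation_c : forall e, e \in E -> e \subset V ->
  \sum_(p | window_pair k0 m.+2 p) c p.1 p.2 * minor 2 extension [set p.1; p.2] e = 0.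

Lemma relation_row_k0 (b : 'I_n) : (k0.+1 <= b < k0.+1 + m)%N -> c k0 b = 0.
Proof.
have edge_row x z : x \in V -> z \in V' -> x != z ->
    (forall a : 'I_n, (a <= k0 + m)%N -> extension a x = (a == k0)%:R) ->
    [set x; z] \in E -> \sum_b c k0 b * Y' b z = 0.
  move=> xV zV' xz Yx xzE; rewrite -(extension_edge_sum c Yx zV').
  apply: sum_minor_edge xz _ _ => [p /and3P[]//|].
  by apply: relation_c xzE _; rewrite subUset !sub1set xV (subsetP V'_subset).
rewrite -card_V'; move: b; apply: (realizes_span realY') => z zV'.
have /and3P[zw zu zV] : [&& z != w, z != u & z \in V] by rewrite -mem_V'.
case/orP: (cover zV zu zw) => zE.
  by apply: (edge_row u) => //; [rewrite eq_sym | move=> a _; rewrite extension_u].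
apply: (edge_row w) => //; first by rewrite eq_sym.
move=> a a_le; rewrite extension_w (_ : (a == k1) = false) ?addr0 //.
by apply/eqP => /(congr1 val) /=; lia.
Qed.

Lemma relation_shifted p : window_pair k0.+1 m p -> c p.1 p.2 = 0.
Proof.
rewrite -card_V'; move: p; apply: (realizes_dominates realY') => e eE eV'.
have [t1 [t2 [t12 ee]]] := edge_set2 (graphE eE); subst e.
move: (eV'); rewrite subUset !sub1set => /andP[t1V' t2V'].
have := relation_c eE (subset_trans eV' V'_subset).
rewrite (bigID (fun p : 'I_n * 'I_n => (p.1 : nat) == k0)) /= big1 ?add0r; last first.
  move=> q /andP[/and3P[_ q12 _] /eqP q1k].
  have q1_le : (q.1 <= k0)%N by rewrite q1k.
  rewrite minor_set2 // !extension_V' // !(realizes_below _ q1_le).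
  by rewrite !mul0r subrr mulr0.
move=> H; rewrite -[RHS]H card_V'; apply: eq_big => q.
  by rewrite /window_pair; apply/idP/idP; lia.
by move=> /and3P[_ q12 _]; rewrite minor_extension.
Qed.

End Relation.

Lemma extension_dominates (c : 'I_n -> 'I_n -> rat) :
  (forall e, e \in E -> e \subset V ->
     \sum_(p | window_pair k0 #|V| p) c p.1 p.2 * minor 2 extension [set p.1; p.2] e = 0) ->
  forall p, window_pair k0 #|V| p -> c p.1 p.2 = 0.
Proof.
rewrite card_V => relation_c p win; have [p1k|p1k] := eqVneq (p.1 : nat) k0.
  rewrite (_ : p.1 = k0); last exact: val_inj.
  by apply: (relation_row_k0 relation_c); move: win; rewrite /window_pair; lia.
by apply: (relation_shifted relation_c); move: win p1k; rewrite /window_pair; lia.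
Qed.

Lemma realizes_extension : realizes k0 V extension.
Proof.
split; [exact: extension_support | exact: extension_span | exact: extension_dominates].
Qed.

End Extension.

Lemma realizes_exists m (k : nat) (V : {set 'I_n}) :
  #|V| = m -> (k + m <= n)%N -> exists Y, realizes k V Y.
Proof.
elim/ltn_ind: m k V => -[|[|m]] IH k V cardV kmn.
- by exists 0; apply: realizes_card0.
- have k_lt : (k < n)%N by lia.
  exact: (realizes_card1 (Ordinal k_lt)).
have [|u [w [uV wV uw cover]]] := @dominating_pair V; first by rewrite cardV.
have card_V' : #|V :\ u :\ w| = m.
  by move: cardV; rewrite (cardsD1 u V) uV (cardsD1 w (V :\ u)) !inE eq_sym uw wV /=; lia.
have [Y' realY'] : exists Y', realizes k.+1 (V :\ u :\ w) Y'.
  by apply: (IH m) => //; lia.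
have k_lt : (k < n)%N by lia.
have k1_lt : ((k + m).+1 < n)%N by lia.
exists (extension u w (Ordinal k_lt) (Ordinal k1_lt) Y').
exact: (realizes_extension (k0 := Ordinal k_lt) (k1 := Ordinal k1_lt) uV wV uw cover card_V').
Qed.

Lemma row_free_minor_mx_Bn (Y : 'M[rat]_n) :
  realizes 0 [set: 'I_n] Y -> row_free (minor_mx 2 Y (Bn n) E).
Proof.
case=> _ _; rewrite cardsT card_ord => domY.
apply: inj_row_free => v vM0.
(* [v] reindexed by the 2-sets labelling the rows; each label occurs once. *)
pose cv (S : {set 'I_n}) := \sum_(i | enum_val i == S) v 0 i.
have cv0 p : window_pair 0 n p -> cv [set p.1; p.2] = 0.
  move: p; apply: (domY (fun a b => cv [set a; b])) => e eE _.
  have := congr1 (fun M : 'M[rat]_(1, #|E|) => M 0 (enum_rank_in eE e)) vM0.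
  rewrite !mxE => vMe; rewrite -[RHS]vMe.
  rewrite [RHS](partition_big (fun i => enum_val i) (mem (Bn n))) /=; last first.
    by move=> i _; apply: enum_valP.
  rewrite [RHS](eq_bigr (fun S => cv S * minor 2 Y S e)); last first.
    move=> S _; rewrite /cv mulr_suml; apply: eq_bigr => i /eqP <-.
    by rewrite mxE (enum_rankK_in eE eE).
  rewrite /Bn big_imset /=; last first.
    move=> [a b] [a' b']; rewrite !inE /= => /andP[ab _] /andP[ab' _] eq_ab.
    by have := val_enum_set2 ab; rewrite eq_ab (val_enum_set2 ab') => -[/val_inj -> /val_inj ->].
  by apply: eq_bigl => p; rewrite /window_pair !inE; apply/idP/idP; lia.
apply/rowP => i; rewrite mxE.
have /imsetP[p pB i_p] := enum_valP i.
have := cv0 p; rewrite -i_p /cv (big_pred1 i) => [|j]; last by rewrite /= (inj_eq enum_val_inj).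
by apply; move: pB; rewrite /window_pair !inE; lia.
Qed.

End Realization.

Local Close Scope ring_scope.

Theorem mainTheorem2 (n : nat) (E : {set {set 'I_n}}) :
  is_graph E ->
  (forall T : {set 'I_n}, #|T| = 3 -> exists2 e, e \in E & e \subset T) ->
  dominates 2 E (Bn n).
Proof.
move=> graphE triangleE.
have cardT : #|[set: 'I_n]| = n by rewrite cardsT card_ord.
have [Y realY] := realizes_exists graphE triangleE cardT (leqnn (0 + n)).
exact/dominates_specialization/(row_free_minor_mx_Bn realY).
Qed.
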